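(* For every sufficiently large prime $p$, there is a set $A\subset\{1,2,\dots,\lfloor p/2\rfloor-1\}$ such that (i) the sets $A$ and $A+A+\{0,1\}$ are disjoint, and (ii) $A+A+A$ contains $p+2$ consecutive integers.
   Context: For sets $X,Y\subset\mathbb Z$, $X+Y=\{x+y:x\in X,y\in Y\}$. *)

From mathcomp Require Import all_boot.
Set Implicit Arguments. Unset Strict Implicit. Unset Printing Implicit Defensive.

(* Sumsets of finite sets of naturals (all sets here lie in N, so integer
   sumsets coincide with sumsets computed in nat). *)
Definition sumset (X Y : seq nat) : seq nat := [seq x + y | x <- X, y <- Y].

From mathcomp Require Import all_boot.
From mathcomp Require Import zify.

Set Implicit Arguments.
Unset Strict Implicit.
Unset Printing Implicit Defensive.

(* For every prime p >= 40000 there is A in [1, N], N = p/2 - 1, such that A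
   and A + A + {0, 1} are disjoint while A + A + A contains the p + 2 = 2N + 5
   consecutive integers N - 4, ..., 3N.

   Writing N = 200 q + r with 0 <= r < 200, take
     A = [46q + r + 2, 69q] u [77q, 84q] u {154q - 1} u [168q + 2, N].
   Sum-freeness: below N, pair sums (plus 0 or 1) only come from the two lower
   blocks and fall in [92q + 2r + 4, 153q + 1] u [154q, 168q + 1], which A
   misses.  Covering: the sum of three intervals of A is an interval of
   A + A + A, and twelve such triple sums overlap one another, from
   2 (46q + r + 2) + 77q <= N - 4 up to 3N. *)

Definition seg (a b : nat) : seq nat := iota a (b.+1 - a).

Lemma mem_seg a b x : (x \in seg a b) = (a <= x <= b).
Proof. rewrite mem_iota; lia. Qed.

Definition interval_in (X : seq nat) (a b : nat) : Prop :=
  a <= b /\ forall t, a <= t <= b -> t \in X.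

Lemma seg_interval a b : a <= b -> interval_in (seg a b) a b.
Proof. by move=> hab; split=> // t; rewrite mem_seg. Qed.

Lemma interval_in_catl X Y a b : interval_in X a b -> interval_in (X ++ Y) a b.
Proof. by move=> [hab hX]; split=> // t ht; rewrite mem_cat hX. Qed.

Lemma interval_in_catr X Y a b : interval_in Y a b -> interval_in (X ++ Y) a b.
Proof. by move=> [hab hY]; split=> // t ht; rewrite mem_cat hY ?orbT. Qed.

Lemma interval_sub X a b a' b' :
  interval_in X a b -> a <= a' <= b' -> b' <= b -> interval_in X a' b'.
Proof. by move=> [_ hX] ha hb; split=> [|t ht]; [lia | apply: hX; lia]. Qed.

Lemma interval_union X a b c d :
  interval_in X a b -> interval_in X c d -> c <= b.+1 -> b <= d ->
  interval_in X a d.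
Proof.
move=> [hab hX] [hcd hY] hcb hbd; split=> [|t ht]; first lia.
by case: (leqP t b) => htb; [apply: hX | apply: hY]; lia.
Qed.

Lemma interval_chain X (s : seq (nat * nat)) a b :
  interval_in X a b -> (forall u, u \in s -> interval_in X u.1 u.2) ->
  path (fun u v => (v.1 <= u.2.+1) && (u.2 <= v.2)) (a, b) s ->
  interval_in X a (last (a, b) s).2.
Proof.
elim: s a b => [//|[c d] s IHs] a b hX hs /= /andP[/andP[hcb hbd] hpath].
have hcd := hs (c, d) (mem_head _ _).
rewrite (_ : (last (c, d) s).2 = (last (a, d) s).2); last by case: s {IHs hs hpath}.
apply: (IHs _ _ (interval_union hX hcd hcb hbd)) => [u hu|].
  by apply: hs; rewrite inE hu orbT.
by case: s hpath {IHs hs}.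
Qed.

Lemma sumset_mem (X Y : seq nat) x y :
  x \in X -> y \in Y -> x + y \in sumset X Y.
Proof. move=> hx hy; exact: (allpairs_f (fun a b => a + b) hx hy). Qed.

Lemma sumsetP (X Y : seq nat) z :
  z \in sumset X Y -> exists x y, [/\ x \in X, y \in Y & z = x + y].
Proof. by move/allpairsP=> [[x y] [/= hx hy ->]]; exists x, y. Qed.

Lemma interval_sumset X Y a b c d :
  interval_in X a b -> interval_in Y c d ->
  interval_in (sumset X Y) (a + c) (b + d).
Proof.
move=> [hab hX] [hcd hY]; split=> [|t ht]; first lia.
have -> : t = minn b (t - c) + (t - minn b (t - c)) by lia.
by apply: sumset_mem; [apply: hX | apply: hY]; lia.
Qed.

Lemma interval_sumset3 X a b c d e f :
  interval_in X a b -> interval_in X c d -> interval_in X e f ->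
  interval_in (sumset (sumset X X) X) (a + c + e) (b + d + f).
Proof. by move=> h1 h2 h3; apply: interval_sumset => //; apply: interval_sumset. Qed.

Section Construction.
Variables q r N : nat.

Definition lo1 : nat := 46 * q + r + 2.
Definition hi1 : nat := 69 * q.
Definition lo2 : nat := 77 * q.
Definition hi2 : nat := 84 * q.
Definition mid : nat := 154 * q - 1.
Definition lo3 : nat := 168 * q + 2.

Definition construction : seq nat :=
  seg lo1 hi1 ++ seg lo2 hi2 ++ seg mid mid ++ seg lo3 N.

Local Notation A := construction.

Lemma mem_construction x :
  (x \in A) = [|| lo1 <= x <= hi1, lo2 <= x <= hi2, x == mid | lo3 <= x <= N].
Proof. rewrite !mem_cat !mem_seg; lia. Qed.

Hypothesis q_large : 70 <= q.
Hypothesis r_small : r < 200.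
Hypothesis N_def : N = 200 * q + r.

Lemma construction_bounds x : x \in A -> 1 <= x <= N.
Proof. rewrite mem_construction /lo1 /hi1 /lo2 /hi2 /mid /lo3; lia. Qed.

(* Below N, every element of A + A + {0, 1} lies in one of two windows
   (coming from the blocks [lo1, hi1] and [lo2, hi2]) ... *)
Lemma small_pair_sums y z e :
  y \in A -> z \in A -> e <= 1 -> y + z + e <= N ->
  (2 * lo1 <= y + z + e <= hi1 + hi2 + 1) || (2 * lo2 <= y + z + e <= 2 * hi2 + 1).
Proof.
rewrite !mem_construction /lo1 /hi1 /lo2 /hi2 /mid /lo3; lia.
Qed.

(* ... and A misses both windows: mid sits in the gap between them. *)
Lemma construction_avoids_windows x :
  x \in A -> ~~ (2 * lo1 <= x <= hi1 + hi2 + 1) && ~~ (2 * lo2 <= x <= 2 * hi2 + 1).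
Proof. rewrite mem_construction /lo1 /hi1 /lo2 /hi2 /mid /lo3; lia. Qed.

Lemma construction_sumfree x :
  x \in A -> x \notin sumset (sumset A A) [:: 0; 1].
Proof.
move=> xA; apply/negP=> /sumsetP[w [e [/sumsetP[y [z [yA zA ->]]] e01 xE]]].
have e_le1 : e <= 1 by move: e01; rewrite !inE => /orP[] /eqP->.
have sum_le_N : y + z + e <= N by rewrite -xE; case/andP: (construction_bounds xA).
have := small_pair_sums yA zA e_le1 sum_le_N.
by have := construction_avoids_windows xA; rewrite xE; lia.
Qed.

(* Twelve sums of three blocks of A form a chain of overlapping intervals
   from 2 lo1 + lo2 <= N - 4 up to 3 N. *)
Lemma construction_triple_cover :
  interval_in (sumset (sumset A A) A) (N - 4) (3 * N).
Proof.
have B1 : interval_in A lo1 hi1.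
  by apply/interval_in_catl/seg_interval; rewrite /lo1 /hi1; lia.
have B2 : interval_in A lo2 hi2.
  by apply/interval_in_catr/interval_in_catl/seg_interval; rewrite /lo2 /hi2; lia.
have BM : interval_in A mid mid.
  by do 2 apply/interval_in_catr; apply/interval_in_catl/seg_interval.
have B3 : interval_in A lo3 N.
  by do 3 apply/interval_in_catr; apply/seg_interval; rewrite /lo3; lia.
have chain := interval_chain
  (s := [:: (lo1 + lo2 + lo2, hi1 + hi2 + hi2); (lo2 + lo2 + lo2, hi2 + hi2 + hi2);
           (lo1 + lo1 + mid, hi1 + hi1 + mid); (lo1 + lo1 + lo3, hi1 + hi1 + N);
           (lo2 + lo2 + lo3, hi2 + hi2 + N); (lo1 + mid + mid, hi1 + mid + mid);
           (lo1 + mid + lo3, hi1 + mid + N); (lo2 + lo3 + lo3, hi2 + N + N);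
           (mid + mid + lo3, mid + mid + N); (mid + lo3 + lo3, mid + N + N);
           (lo3 + lo3 + lo3, N + N + N)])
  (interval_sumset3 B1 B1 B2).
apply: interval_sub (chain _ _) _ _ => [u||/=|/=].
- by rewrite !inE; do ![case/orP=> [/eqP-> | ]]; [..|move/eqP->];
    apply: interval_sumset3.
- rewrite /= /lo1 /hi1 /lo2 /hi2 /mid /lo3; lia.
- rewrite /lo1 /lo2; lia.
- lia.
Qed.

End Construction.

Theorem lemma3p1 :
  exists p0 : nat, forall p : nat, p0 <= p -> prime p ->
    exists A : seq nat,
      {subset A <= iota 1 (p./2 - 1)} /\
      (forall x : nat, x \in A -> x \notin sumset (sumset A A) [:: 0; 1]) /\
      exists m : nat, forall k : nat, k < p + 2 ->
        m + k \in sumset (sumset A A) A.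
Proof.
exists (200 * 200) => p p_large p_prime.
have p_odd : odd p by case: (even_prime p_prime) => // p2; rewrite p2 in p_large.
have p_half : p = (p./2).*2 + 1 by rewrite -[LHS]odd_double_half p_odd addnC.
set N := p./2 - 1.
have N_def : N = 200 * (N %/ 200) + N %% 200 by rewrite mulnC -divn_eq.
have q_large : 70 <= N %/ 200 by lia.
have r_small : N %% 200 < 200 by rewrite ltn_mod.
pose A := construction (N %/ 200) (N %% 200) N.
exists A; split; [|split].
- by move=> x /(construction_bounds q_large r_small N_def); rewrite mem_iota; lia.
- exact: construction_sumfree q_large r_small N_def.
- have [_ cover] := construction_triple_cover q_large r_small N_def.
  by exists (N - 4) => k k_small; apply: cover; lia.
Qed.
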